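(* Let $(L,\nu,\tau)$ be a Šerstnev random normed space whose triangle function satisfies $\tau(F,G)(x)\ge\sup_{t\in[0,1]}\min\{F(tx),G((1-t)x)\}$ for all $x\ge0$ and $F,G\in D^+$. If $A\subset L$ is convex and $\epsilon>0$, then $A_\epsilon=\{q\in L:\exists p\in A,\ \nu(p-q)(\epsilon)>1-\epsilon\}$ is convex.
   Context: $\Delta^+$ is the set of functions $F:[-\infty,\infty]\to[0,1]$ that are nondecreasing, left-continuous on $\mathbb R$, with $F(-\infty)=0$, $F(\infty)=1$, $F(0)=0$; ordered pointwise; $D^+=\{F\in\Delta^+:\lim_{x\to\infty}F(x)=1\}$; $\epsilon_0(x)=0$ for $x\le0$, $=1$ for $x>0$. A triangle function is $\tau:\Delta^+\times\Delta^+\to\Delta^+$ commutative, associative, nondecreasing in each argument, with $\tau(F,\epsilon_0)=F$, continuous for weak convergence. A Šerstnev random normed space $(L,\nu,\tau)$: $L$ a real vector space, $\tau$ a continuous triangle function with $\tau(D^+\times D^+)\subset D^+$, $\nu:L\to D^+$ with $\nu(p)=\epsilon_0\iff p=0$; $\nu(ap)(x)=\nu(p)(x/|a|)$ for $x\ge0$, $a\ne0$; $\nu(p+q)\ge\tau(\nu(p),\nu(q))$. *)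

From HB Require Import structures.
From mathcomp Require Import all_boot all_order all_algebra.
From mathcomp Require Import all_classical all_reals all_analysis.
Set Implicit Arguments. Unset Strict Implicit. Unset Printing Implicit Defensive.
Import Order.TTheory GRing.Theory Num.Theory.
Import numFieldNormedType.Exports.
Local Open Scope classical_set_scope.
Local Open Scope ring_scope.

(* A distribution function F : [-oo,+oo] -> [0,1] is represented by its
   restriction to the reals; the values F(-oo) = 0 and F(+oo) = 1 are fixed
   by convention and hence not stored.  Pointwise order on [-oo,+oo] thus
   coincides with pointwise order on R. *)
Definition distf (R : realType) := R -> R.

Definition in_Delta_plus (R : realType) (F : distf R) : Prop :=
  [/\ (forall x, 0 <= F x <= 1),
      {homo F : x y / x <= y},
      (forall x : R, F y @[y --> x^'-] --> F x) &
      F 0 = 0].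

Definition in_D_plus (R : realType) (F : distf R) : Prop :=
  in_Delta_plus F /\ F x @[x --> +oo] --> (1 : R).

Definition eps0 (R : realType) : distf R := fun x => if x <= 0 then 0 else 1.

Definition dle (R : realType) (F G : distf R) : Prop := forall x, F x <= G x.

Definition weak_cvg (R : realType) (Fn : nat -> distf R) (F : distf R) : Prop :=
  forall x : R, {for x, continuous F} -> (fun n => Fn n x) @ \oo --> F x.

Definition triangle_function (R : realType) (tau : distf R -> distf R -> distf R) : Prop :=
  ((forall F G, in_Delta_plus F -> in_Delta_plus G -> in_Delta_plus (tau F G)) /\
      (forall F G, in_Delta_plus F -> in_Delta_plus G -> tau F G = tau G F) /\
      (forall F G H, in_Delta_plus F -> in_Delta_plus G -> in_Delta_plus H ->
         tau F (tau G H) = tau (tau F G) H) /\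
      (forall F G H, in_Delta_plus F -> in_Delta_plus G -> in_Delta_plus H ->
         dle F G -> dle (tau F H) (tau G H)) /\
      (forall F, in_Delta_plus F -> tau F (@eps0 R) = F) /\
      (forall Fn Gn F G, (forall n, in_Delta_plus (Fn n)) -> (forall n, in_Delta_plus (Gn n)) ->
         in_Delta_plus F -> in_Delta_plus G ->
         weak_cvg Fn F -> weak_cvg Gn G ->
         weak_cvg (fun n => tau (Fn n) (Gn n)) (tau F G))).

Definition serstnev_RNS (R : realType) (L : lmodType R) (nu : L -> distf R)
  (tau : distf R -> distf R -> distf R) : Prop :=
  (triangle_function tau /\
      (forall F G, in_D_plus F -> in_D_plus G -> in_D_plus (tau F G)) /\
      (forall p, in_D_plus (nu p)) /\
      (forall p, nu p = @eps0 R <-> p = 0) /\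
      (forall (a : R) p x, a != 0 -> 0 <= x -> nu (a *: p) x = nu p (x / `|a|)) /\
      (forall p q, dle (tau (nu p) (nu q)) (nu (p + q)))).

Definition eps_neighbourhood (R : realType) (L : lmodType R) (nu : L -> distf R)
  (A : set L) (eps : R) : set L :=
  [set q | exists2 p, A p & nu (p - q) eps > 1 - eps].

From HB Require Import structures.
From mathcomp Require Import all_boot all_order all_algebra.
From mathcomp Require Import all_classical all_reals all_analysis.
Set Implicit Arguments. Unset Strict Implicit. Unset Printing Implicit Defensive.
Import Order.TTheory GRing.Theory Num.Theory.
Local Open Scope classical_set_scope.
Local Open Scope ring_scope.
Local Open Scope convex_scope.

(* If q1, q2 are eps-close to p1, p2, then for 0 < a < 1 the difference of the
   convex combinations a p1 + (1-a) p2 and a q1 + (1-a) q2 is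
   a (p1 - q1) + (1-a) (p2 - q2).  Šerstnev homogeneity gives
   nu(a r)(a eps) = nu(r)(eps), so evaluating the sup-min bound on tau at t = a
   shows nu(a r1 + (1-a) r2)(eps) >= min(nu r1 eps, nu r2 eps) > 1 - eps. *)

Lemma conv_lmodE (R : numDomainType) (L : lmodType R) (k : {i01 R})
    (p q : convex_lmodType L) :
  (p <| k |> q) = k%:num *: p + (1 - k%:num) *: q :> L.
Proof. by []. Qed.

Lemma conv_lmodB (R : numDomainType) (L : lmodType R) (k : {i01 R})
    (p1 p2 q1 q2 : convex_lmodType L) :
  (p1 <| k |> p2) - (q1 <| k |> q2)
  = k%:num *: (p1 - q1) + (1 - k%:num) *: (p2 - q2) :> L.
Proof. by rewrite !conv_lmodE !scalerBr opprD addrACA. Qed.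

Lemma D_plus_le1 (R : realType) (F : distf R) x : in_D_plus F -> F x <= 1.
Proof. by case=> -[/(_ x) /andP[]]. Qed.

Lemma tau_ge_min (R : realType) (tau : distf R -> distf R -> distf R)
    (F G : distf R) (s x : R) :
  (forall x, 0 <= x ->
     tau F G x >= sup [set Num.min (F (t * x)) (G ((1 - t) * x)) | t in `[0, 1]]) ->
  in_D_plus F -> 0 <= s <= 1 -> 0 <= x ->
  Num.min (F (s * x)) (G ((1 - s) * x)) <= tau F G x.
Proof.
move=> tau_sup DF s01 x0; apply: le_trans (tau_sup _ x0).
apply: ub_le_sup; last by exists s; rewrite // in_itv.
by exists 1 => _ [u _ <-]; rewrite ge_min D_plus_le1.
Qed.

Section serstnev_convex_combination.
Variables (R : realType) (L : lmodType R) (nu : L -> distf R)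
  (tau : distf R -> distf R -> distf R).
Hypothesis nuD : forall p, in_D_plus (nu p).
Hypothesis nuZ : forall (a : R) p x, a != 0 -> 0 <= x -> nu (a *: p) x = nu p (x / `|a|).
Hypothesis nuT : forall p q, dle (tau (nu p) (nu q)) (nu (p + q)).
Hypothesis tau_sup_min : forall (F G : distf R) (x : R),
  in_D_plus F -> in_D_plus G -> 0 <= x ->
  tau F G x >= sup [set Num.min (F (t * x)) (G ((1 - t) * x)) | t in `[0, 1]].

Lemma nu_scale_pos (a x : R) p : 0 < a -> 0 <= x -> nu (a *: p) (a * x) = nu p x.
Proof.
move=> a0 x0; rewrite nuZ ?lt0r_neq0 ?(mulr_ge0 (ltW a0)) //.
by rewrite gtr0_norm // mulrAC divff ?mul1r ?lt0r_neq0.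
Qed.

Lemma nu_convex_comb_ge (a x : R) p q : 0 < a -> a < 1 -> 0 <= x ->
  Num.min (nu p x) (nu q x) <= nu (a *: p + (1 - a) *: q) x.
Proof.
move=> a0 a1 x0; apply: le_trans (nuT _ _ x).
have b0 : 0 < 1 - a by rewrite subr_gt0.
rewrite -(nu_scale_pos p a0 x0) -(nu_scale_pos q b0 x0).
apply: tau_ge_min (nuD _) _ x0; last by rewrite (ltW a0) (ltW a1).
by move=> y; exact: tau_sup_min.
Qed.

End serstnev_convex_combination.

Theorem mainTheorem7 (R : realType) (L : lmodType R) (nu : L -> distf R)
  (tau : distf R -> distf R -> distf R) :
  serstnev_RNS nu tau ->
  (forall (F G : distf R) (x : R), in_D_plus F -> in_D_plus G -> 0 <= x ->
     tau F G x >= sup [set Num.min (F (t * x)) (G ((1 - t) * x)) | t in `[0, 1]]) ->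
  forall (A : set (convex_lmodType L)) (eps : R),
    convex_set A -> 0 < eps ->
    convex_set (eps_neighbourhood nu A eps : set (convex_lmodType L)).
Proof.
move=> [_ [_ [nuD [_ [nuZ nuT]]]]] tau_sup_min A eps convA eps0.
apply/convex_setW => q1 q2; rewrite !inE => -[p1 Ap1 close1] [p2 Ap2 close2] k k0 k1.
rewrite inE; exists ((p1 : convex_lmodType L) <| k |> p2).
  by have := convA p1 p2 k; rewrite !inE; apply.
rewrite conv_lmodB.
apply: lt_le_trans (nu_convex_comb_ge nuD nuZ nuT tau_sup_min _ _ k0 k1 (ltW eps0)).
by rewrite lt_min close1 close2.
Qed.
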